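(* Let $\mathcal X$ be a nonempty set, $n,m,d$ positive integers, and for $i=1,\dots,n$ let $\omega_i>0$, let $\mathbf C_i\in\mathbb H^{d\times d}_{++}$, and let $\mathbf A^{1/2}_i:\mathcal X\to\mathbb C^{m\times d}$ and $\mathbf B_i:\mathcal X\to\mathbb H^{m\times m}_{++}$ be arbitrary functions. Define the matrix ratio $\mathbf M_i(x)=(\mathbf A^{1/2}_i(x))^{H}\mathbf B_i(x)^{-1}\mathbf A^{1/2}_i(x)\in\mathbb C^{d\times d}$ and, for $x\in\mathcal X$ and $\mathbf Y_1,\dots,\mathbf Y_n\in\mathbb C^{m\times d}$, $$f_q(x,\mathbf Y_1,\dots,\mathbf Y_n)=\sum_{i=1}^n\omega_i\,\mathrm{tr}\Big(2\Re\{(\mathbf A^{1/2}_i(x))^{H}\mathbf Y_i\mathbf C_i\}-\mathbf Y_i^{H}\mathbf B_i(x)\mathbf Y_i\mathbf C_i\Big).$$ Then for every fixed $x\in\mathcal X$, $\max_{\mathbf Y_1,\dots,\mathbf Y_n\in\mathbb C^{m\times d}} f_q(x,\mathbf Y_1,\dots,\mathbf Y_n)=\sum_{i=1}^n\omega_i\,\mathrm{tr}(\mathbf C_i\mathbf M_i(x))$, the maximum being attained uniquely at $\mathbf Y_i=\mathbf B_i(x)^{-1}\mathbf A^{1/2}_i(x)$, $i=1,\dots,n$. Consequently, the problem $\max_{x\in\mathcal X}\sum_{i=1}^n\omega_i\mathrm{tr}(\mathbf C_i\mathbf M_i(x))$ is equivalent to $\max_{x\in\mathcal X,\ \mathbf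 Y_i\in\mathbb C^{m\times d}} f_q(x,\mathbf Y_1,\dots,\mathbf Y_n)$: both have the same optimal value, and $x^\star$ is optimal for the former if and only if $(x^\star,\mathbf B_1(x^\star)^{-1}\mathbf A^{1/2}_1(x^\star),\dots,\mathbf B_n(x^\star)^{-1}\mathbf A^{1/2}_n(x^\star))$ is optimal for the latter.
   Context: $\mathbb H^{k\times k}_{++}$ denotes the set of $k\times k$ Hermitian positive definite matrices; $(\cdot)^H$ is conjugate transpose; $\Re$ is the real part applied entrywise (so $\mathrm{tr}(2\Re\{\mathbf A\})=2\Re\,\mathrm{tr}(\mathbf A)$). *)

From HB Require Import structures.
From mathcomp Require Import all_boot all_order all_algebra.
From mathcomp Require Import reals.
From mathcomp Require Export complex.
Set Implicit Arguments. Unset Strict Implicit. Unset Printing Implicit Defensive.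
Import Order.TTheory GRing.Theory Num.Theory.
Local Open Scope ring_scope.

Definition ctrmx (F : numClosedFieldType) (p q : nat) (A : 'M[F]_(p, q)) : 'M[F]_(q, p) :=
  map_mx Num.conj A^T.

Definition remx (F : numClosedFieldType) (p q : nat) (A : 'M[F]_(p, q)) : 'M[F]_(p, q) :=
  map_mx (fun z => 'Re z) A.

Definition hpd (F : numClosedFieldType) (k : nat) (A : 'M[F]_k) : Prop :=
  ctrmx A = A /\ (forall v : 'cV[F]_k, v != 0 -> 0 < (ctrmx v *m A *m v) ord0 ord0).

Definition mratio (F : numClosedFieldType) (m d : nat)
  (Ah : 'M[F]_(m, d)) (B : 'M[F]_m) : 'M[F]_d :=
  ctrmx Ah *m invmx B *m Ah.

Definition fq (F : numClosedFieldType) (X : Type) (n m d : nat)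
  (w : 'I_n -> F) (Cm : 'I_n -> 'M[F]_d)
  (Ah : 'I_n -> X -> 'M[F]_(m, d)) (B : 'I_n -> X -> 'M[F]_m)
  (x : X) (Y : 'I_n -> 'M[F]_(m, d)) : F :=
  \sum_(i < n) w i * \tr (2%:R *: remx (ctrmx (Ah i x) *m Y i *m Cm i)
                           - ctrmx (Y i) *m B i x *m Y i *m Cm i).

Definition fobj (F : numClosedFieldType) (X : Type) (n m d : nat)
  (w : 'I_n -> F) (Cm : 'I_n -> 'M[F]_d)
  (Ah : 'I_n -> X -> 'M[F]_(m, d)) (B : 'I_n -> X -> 'M[F]_m) (x : X) : F :=
  \sum_(i < n) w i * \tr (Cm i *m mratio (Ah i x) (B i x)).

Definition Yopt (F : numClosedFieldType) (X : Type) (n m d : nat)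
  (Ah : 'I_n -> X -> 'M[F]_(m, d)) (B : 'I_n -> X -> 'M[F]_m) (x : X) (i : 'I_n)
  : 'M[F]_(m, d) := invmx (B i x) *m Ah i x.

From HB Require Import structures.
From mathcomp Require Import all_boot all_order all_algebra.
From mathcomp Require Import reals complex.
From mathcomp Require Import spectral.
From mathcomp Require Import ring.
From Stdlib Require Import FunctionalExtensionality.
Import Order.TTheory GRing.Theory Num.Theory.
Local Open Scope ring_scope.
Set Implicit Arguments. Unset Strict Implicit. Unset Printing Implicit Defensive.

(* Completing the square: for Hermitian B > 0 and C > 0,
     tr(2 Re{A^H Y C} - Y^H B Y C) = tr(C A^H B^-1 A) - tr(Z^H B Z C)
   with Z = Y - B^-1 A, and tr(Z^H B Z C) > 0 unless Z = 0 (diagonalize C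
   unitarily; each diagonal term is a positive eigenvalue of C times a
   B-quadratic form).  Summing with positive weights solves the inner
   maximization over the Y_i in closed form; the equivalence of the two outer
   problems is then pure order theory. *)

Section ConjugateTranspose.
Variable F : numClosedFieldType.

Lemma ctrmxM p q r (A : 'M[F]_(p, q)) (B : 'M[F]_(q, r)) :
  ctrmx (A *m B) = ctrmx B *m ctrmx A.
Proof. by rewrite /ctrmx trmx_mul map_mxM. Qed.

Lemma ctrmxK p q (A : 'M[F]_(p, q)) : ctrmx (ctrmx A) = A.
Proof. by apply/matrixP=> i j; rewrite !mxE conjCK. Qed.

Lemma ctrmxB p q (A B : 'M[F]_(p, q)) : ctrmx (A - B) = ctrmx A - ctrmx B.
Proof. by apply/matrixP=> i j; rewrite !mxE rmorphB. Qed.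

Lemma ctrmx_eq0 p q (A : 'M[F]_(p, q)) : (ctrmx A == 0) = (A == 0).
Proof.
apply/eqP/eqP=> [A0|->]; last by apply/matrixP=> i j; rewrite !mxE rmorph0.
by apply/matrixP=> i j; move/matrixP/(_ j i)/eqP: A0; rewrite !mxE conjC_eq0 => /eqP.
Qed.

Lemma ctrmx_invmx k (B : 'M[F]_k) : ctrmx B = B -> ctrmx (invmx B) = invmx B.
Proof. by move=> Bh; rewrite /ctrmx trmx_inv map_invmx -/(ctrmx B) Bh. Qed.

Lemma row_ctrmx p q (A : 'M[F]_(p, q)) k : row k A = ctrmx (col k (ctrmx A)).
Proof. by apply/matrixP=> i j; rewrite !mxE conjCK. Qed.

Lemma mxtrace_ctrmx p (A : 'M[F]_p) : \tr (ctrmx A) = (\tr A)^*.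
Proof. by rewrite /mxtrace rmorph_sum; apply: eq_bigr => i _; rewrite !mxE. Qed.

Lemma mxtrace_remx p (A : 'M[F]_p) : \tr (remx A) = (\tr A + (\tr A)^*) / 2.
Proof.
rewrite /mxtrace rmorph_sum -big_split /= mulr_suml.
by apply: eq_bigr => i _; rewrite !mxE ReE.
Qed.

End ConjugateTranspose.

Section PositiveDefinite.
Variable F : numClosedFieldType.

Definition hform k (A : 'M[F]_k) (v : 'cV[F]_k) : F := (ctrmx v *m A *m v) 0 0.

Lemma mulmx3E p q r s (X : 'M[F]_(p, q)) (S : 'M[F]_(q, r)) (W : 'M[F]_(r, s)) i j :
  (X *m S *m W) i j = (row i X *m S *m col j W) 0 0.
Proof.
rewrite !mxE; apply: eq_bigr => l _; rewrite !mxE; congr (_ * _).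
by apply: eq_bigr => h _; rewrite !mxE.
Qed.

Lemma hform_ge0 k (B : 'M[F]_k) v : hpd B -> 0 <= hform B v.
Proof.
case=> _ Bpos; have [->|v0] := eqVneq v 0; last exact/ltW/Bpos.
by rewrite /hform mulmx0 mxE.
Qed.

Lemma hform_eq0 k (B : 'M[F]_k) v : hpd B -> hform B v = 0 -> v = 0.
Proof.
case=> _ Bpos Bv0; apply/eqP; apply: contraT => /Bpos.
by rewrite -/(hform B v) Bv0 ltxx.
Qed.

Lemma hpd_unitmx k (B : 'M[F]_k) : hpd B -> B \in unitmx.
Proof.
move=> hB; rewrite unitmxE unitfE; apply/negP => /det0P [v v0 vB].
suff /(hform_eq0 hB) : hform B (ctrmx v) = 0.
  by move/eqP; rewrite ctrmx_eq0 (negPf v0).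
by rewrite /hform ctrmxK vB !mul0mx mxE.
Qed.

Lemma col_ctrmx_unitary_neq0 k (P : 'M[F]_k) j :
  P \is unitarymx -> col j (ctrmx P) != 0.
Proof.
move=> /unitarymxP/(congr1 (fun M => col j M j 0)) /=.
rewrite colE -mulmxA -colE -/(ctrmx P) => PQjj; apply/eqP => cj0.
by move: PQjj; rewrite cj0 mulmx0 !mxE eqxx => /eqP; rewrite eq_sym oner_eq0.
Qed.

Lemma mxtrace_mul_hermitian k (S C : 'M[F]_k) : ctrmx C = C ->
  let q j := col j (ctrmx (spectralmx C)) in
  \tr (S *m C) = \sum_j hform S (q j) * hform C (q j).
Proof.
move=> Ch q; have /orthomx_spectralP : C \is normalmx.
  by apply/normalmxP; rewrite -/(ctrmx C) Ch.
rewrite invmx_unitary ?spectral_unitarymx // -/(ctrmx _).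
set P := spectralmx C; set s := spectral_diag C => CE.
have PQ : P *m ctrmx P = 1%:M by apply/unitarymxP/spectral_unitarymx.
have hformE M j : hform M (q j) = (P *m M *m ctrmx P) j j.
  by rewrite mulmx3E row_ctrmx.
have PCQ : P *m C *m ctrmx P = diag_mx s.
  by rewrite CE !mulmxA PQ mul1mx -mulmxA PQ mulmx1.
rewrite {1}CE !mulmxA mxtrace_mulC !mulmxA mul_mx_diag /mxtrace.
by apply: eq_bigr => j _; rewrite !hformE PCQ !mxE eqxx mulr1n.
Qed.

Lemma hform_mulmx m k (B : 'M[F]_m) (Z : 'M[F]_(m, k)) v :
  hform (ctrmx Z *m B *m Z) v = hform B (Z *m v).
Proof. by rewrite /hform ctrmxM !mulmxA. Qed.

Section TraceForm.
Variables (m k : nat) (B : 'M[F]_m) (C : 'M[F]_k).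
Hypotheses (hB : hpd B) (hC : hpd C).
Let q j := col j (ctrmx (spectralmx C)).

Lemma mxtrace_spectral_term_ge0 (Z : 'M[F]_(m, k)) j :
  0 <= hform (ctrmx Z *m B *m Z) (q j) * hform C (q j).
Proof.
by rewrite hform_mulmx; apply: mulr_ge0; [exact: hform_ge0 hB | exact: hform_ge0 hC].
Qed.

Lemma mxtrace_hform_ge0 (Z : 'M[F]_(m, k)) : 0 <= \tr (ctrmx Z *m B *m Z *m C).
Proof.
rewrite mxtrace_mul_hermitian; last by case: hC.
by apply: sumr_ge0 => j _; apply: mxtrace_spectral_term_ge0.
Qed.

Lemma mxtrace_hform_eq0 (Z : 'M[F]_(m, k)) :
  \tr (ctrmx Z *m B *m Z *m C) = 0 -> Z = 0.
Proof.
rewrite mxtrace_mul_hermitian; last by case: hC.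
move=> /(psumr_eq0P (fun j _ => mxtrace_spectral_term_ge0 Z j)) terms0.
have Zq0 j : Z *m q j = 0.
  have Cq_gt0 : 0 < hform C (q j).
    by case: hC => _; apply; apply/col_ctrmx_unitary_neq0/spectral_unitarymx.
  move/eqP: (terms0 j isT); rewrite mulf_eq0 (gt_eqF Cq_gt0) orbF.
  by rewrite hform_mulmx => /eqP/(hform_eq0 hB).
set Q := ctrmx (spectralmx C).
have Qu : Q \in unitmx.
  by apply/unitarymx_unit; rewrite trmxC_unitary spectral_unitarymx.
have ZQ : Z *m Q = 0.
  apply/matrixP => i j; have := congr1 (fun v : 'cV_m => v i 0) (Zq0 j).
  by rewrite /q -/Q colE mulmxA -colE !mxE.
by rewrite -(mulmxK Qu Z) ZQ mul0mx.
Qed.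

End TraceForm.

End PositiveDefinite.

Lemma mxtrace_complete_square (F : numClosedFieldType) m d
    (A Y : 'M[F]_(m, d)) (B : 'M[F]_m) (C : 'M[F]_d) :
  ctrmx B = B -> B \in unitmx -> ctrmx C = C ->
  let Z := Y - invmx B *m A in
  \tr (2%:R *: remx (ctrmx A *m Y *m C) - ctrmx Y *m B *m Y *m C) =
  \tr (C *m mratio A B) - \tr (ctrmx Z *m B *m Z *m C).
Proof.
move=> Bh Bu Ch Z.
have ZBZ : ctrmx Z *m B *m Z =
    ctrmx Y *m B *m Y - ctrmx Y *m A - ctrmx A *m Y + mratio A B.
  rewrite /Z ctrmxB ctrmxM ctrmx_invmx // /mratio.
  rewrite !mulmxBl !mulmxBr -!mulmxA !mulKVmx // !mulmxA.
  by rewrite -[ctrmx A *m invmx B *m B]mulmxA mulVmx // mulmx1 opprD opprK addrA.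
have trYAC : (\tr (ctrmx A *m Y *m C))^* = \tr (ctrmx Y *m A *m C).
  by rewrite -mxtrace_ctrmx !ctrmxM ctrmxK Ch mxtrace_mulC.
rewrite ZBZ !mulmxDl !mulNmx !linearD !linearN /= linearZ /= mxtrace_remx trYAC.
rewrite [\tr (C *m _)]mxtrace_mulC.
have two_neq0 : (2%:R : F) != 0 by rewrite pnatr_eq0.
by field.
Qed.

Section QuadraticTransform.
Variables (F : numClosedFieldType) (X : Type) (n m d : nat).
Variables (w : 'I_n -> F) (Cm : 'I_n -> 'M[F]_d).
Variables (Ah : 'I_n -> X -> 'M[F]_(m, d)) (B : 'I_n -> X -> 'M[F]_m).
Hypotheses (hC : forall i, hpd (Cm i)) (hB : forall i x, hpd (B i x)).

Let gap x (Y : 'I_n -> 'M[F]_(m, d)) i :=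
  let Z := Y i - Yopt Ah B x i in \tr (ctrmx Z *m B i x *m Z *m Cm i).

Lemma fq_complete_square x Y :
  fq w Cm Ah B x Y = fobj w Cm Ah B x - \sum_i w i * gap x Y i.
Proof.
rewrite /fq /fobj -sumrB; apply: eq_bigr => i _; rewrite -mulrBr.
have [Bh _] := hB i x; have [Ch _] := hC i.
by rewrite mxtrace_complete_square // hpd_unitmx.
Qed.

Lemma fq_Yopt x : fq w Cm Ah B x (Yopt Ah B x) = fobj w Cm Ah B x.
Proof.
rewrite fq_complete_square big1 ?subr0 // => i _.
by rewrite /gap subrr !mulmx0 mul0mx linear0 mulr0.
Qed.

Lemma fq_le_fobj x Y : (forall i, 0 <= w i) ->
  fq w Cm Ah B x Y <= fobj w Cm Ah B x.
Proof.
move=> w_ge0; rewrite fq_complete_square gerBl sumr_ge0 // => i _.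
by apply: mulr_ge0 => //; exact: mxtrace_hform_ge0.
Qed.

Lemma fq_eq_fobj x Y : (forall i, 0 < w i) ->
  fq w Cm Ah B x Y = fobj w Cm Ah B x -> forall i, Y i = Yopt Ah B x i.
Proof.
move=> w_gt0; rewrite fq_complete_square => /eqP.
rewrite subr_eq addrC -subr_eq subrr eq_sym => /eqP.
have gap_ge0 i : 0 <= w i * gap x Y i.
  by apply: mulr_ge0; [exact/ltW | exact: mxtrace_hform_ge0].
move=> /(psumr_eq0P (fun i _ => gap_ge0 i)) gaps0 i.
move/eqP: (gaps0 i isT); rewrite mulf_eq0 (gt_eqF (w_gt0 i)) /=.
by move/eqP/(mxtrace_hform_eq0 (hB i x) (hC i))/subr0_eq.
Qed.

End QuadraticTransform.

Section PartialMaximization.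
Local Open Scope order_scope.
Variables (disp : Order.disp_t) (T : porderType disp) (X Y : Type).
Variables (f : X -> Y -> T) (g : X -> T) (yopt : X -> Y).
Hypotheses (f_le_g : forall x y, f x y <= g x) (f_yopt : forall x, f x (yopt x) = g x).

Lemma partial_max_ub v : (forall x, g x <= v) <-> (forall x y, f x y <= v).
Proof.
split=> [g_le x y|f_le x]; first exact: le_trans (f_le_g x y) (g_le x).
by rewrite -f_yopt.
Qed.

Lemma partial_max_attained v :
  (exists xs, g xs = v /\ forall x, g x <= v) <->
  (exists xs ys, f xs ys = v /\ forall x y, f x y <= v).
Proof.
split=> [[xs [<- g_le]]|[xs [ys [<- f_le]]]].
  by exists xs, (yopt xs); rewrite f_yopt; split => //; apply/partial_max_ub.
exists xs; split; last by apply/partial_max_ub.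
by apply/le_anti; rewrite f_le_g -f_yopt f_le.
Qed.

Lemma partial_argmax xs :
  (forall x, g x <= g xs) <-> (forall x y, f x y <= f xs (yopt xs)).
Proof. by rewrite f_yopt; apply: partial_max_ub. Qed.

End PartialMaximization.

Theorem proposition2 (R : realType) (X : Type) (n m d : nat)
  (w : 'I_n -> R) (Cm : 'I_n -> 'M[R[i]]_d)
  (Ah : 'I_n -> X -> 'M[R[i]]_(m, d)) (B : 'I_n -> X -> 'M[R[i]]_m) :
  inhabited X -> (0 < n)%N -> (0 < m)%N -> (0 < d)%N ->
  (forall i, 0 < w i) ->
  (forall i, hpd (Cm i)) ->
  (forall i x, hpd (B i x)) ->
  let wC := fun i => ((w i)%:C)%C in
  let f := fq wC Cm Ah B in
  let g := fobj wC Cm Ah B in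
  (* inner maximization: value g x, attained exactly at Yopt *)
  (forall x : X,
     (forall Y : 'I_n -> 'M[R[i]]_(m, d), f x Y <= g x) /\
     (forall Y : 'I_n -> 'M[R[i]]_(m, d),
        f x Y = g x <-> (forall i, Y i = Yopt Ah B x i))) /\
  (* equivalence of the two outer problems: same upper bounds (same supremum) *)
  (forall v : R[i],
     (forall x, g x <= v) <-> (forall x Y, f x Y <= v)) /\
  (* same attained optimal value *)
  (forall v : R[i],
     (exists xs, g xs = v /\ forall x, g x <= v) <->
     (exists xs Ys, f xs Ys = v /\ forall x Y, f x Y <= v)) /\
  (* optimal solutions correspond *)
  (forall xs : X,
     (forall x, g x <= g xs) <->
     (forall x Y, f x Y <= f xs (Yopt Ah B xs))).
Proof.
move=> _ _ _ _ w_gt0 hC hB wC f g.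
have wC_gt0 i : 0 < wC i by rewrite ltcR.
have f_le_g x Y : f x Y <= g x by apply: fq_le_fobj => // i; exact/ltW.
have f_Yopt x : f x (Yopt Ah B x) = g x by apply: fq_Yopt.
split; [|split; [|split]].
- move=> x; split=> // Y; split; first exact: fq_eq_fobj wC_gt0.
  by move=> Y_opt; rewrite (functional_extensionality _ _ Y_opt).
- by move=> v; apply: (partial_max_ub f_le_g f_Yopt).
- by move=> v; apply: (partial_max_attained f_le_g f_Yopt).
- by move=> xs; apply: (partial_argmax f_le_g f_Yopt).
Qed.
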